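(* Let $\mathcal C$ be a concept hierarchy, $r_1,r_2,\epsilon\in[0,1]$, $a>0$ a real with $r_1\le ar_2(1-\epsilon)$, $m$ a positive integer, and let $\mathcal L$ be the network defined below with fixed sets $F$ and $E$ satisfying the stated constraints. Then $\mathcal L$ $(r_1,r_2)$-recognizes $\mathcal C$: for every $B\subseteq C_0$ presented at time 0, (1) if $c\in supp_{r_2}(B)$ then at least $m(1-\epsilon)$ of the neurons $v\in reps(c)$ fire at time $level(c)$, and (2) if $c\notin supp_{r_1}(B)$ then no neuron $v\in reps(c)$ fires at time $level(c)$.
   Context: Concept hierarchies: fix positive integers $\ell_{max},n,k$. A universal set $D$ of concepts is partitioned into disjoint sets $D_0,\dots,D_{\ell_{max}}$ with $|D_0|=n$; $level(c)=\ell$ for $c\in D_\ell$. A concept hierarchy $\mathcal C$ consists of $C\subseteq D$, with $C_\ell=C\cap D_\ell$, and for each $c\in C_\ell$ with $1\le\ell\le\ell_{max}$ a set $children(c)\subseteq C_{\ell-1}$, such that $|C_{\ell_{max}}|=k$, $|children(c)|=k$ for all such $c$, and $children(c)\cap children(c')=\emptyset$ for distinct $c,c'\in C_\ell$. For $B\subseteq D_0$ and $r\in[0,1]$: $B(0)=B\cap C_0$; for $1\le\ell\le\ell_{max}$, $B(\ell)=\{c\in C_\ell:|children(c)\cap B(\ell-1)|\ge rk\}$; $supp_r(B)=\bigcup_{\ell}B(\ell)$. Network $\mathcal L$: neurons partitioned into layers $N_0,\dots,N_{\ell_{max}}$. Each $c\in D_0$ has a set $reps(c)$ of $m$ neurons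 in $N_0$, each $c\in C$ with $level(c)\ge1$ a set $reps(c)$ of $m$ neurons in $N_{level(c)}$, all pairwise disjoint. $E$ is a set of pairs $(u,v)$ with $v\in reps(c)$ and $u\in reps(c')$ for some child $c'$ of $c$; for $u\in N_{\ell-1}$, $v\in N_\ell$, $w(u,v)=1$ iff $(u,v)\in E$, else $0$. Threshold $\tau=ar_2km(1-\epsilon)$. A fixed set $F$ of neurons is failed (failed neurons never fire). Constraints: for every concept $c$, at least $m(1-\epsilon)$ neurons of $reps(c)$ are not in $F$; and for every $c$ with $level(c)\ge1$, every $v\in reps(c)$ and every child $c'$ of $c$, there are at least $am(1-\epsilon)$ neurons $u\in reps(c')\setminus F$ with $(u,v)\in E$. Input $B\subseteq C_0$ presented at time 0: a layer-0 neuron fires at time 0 iff it is in $\bigcup_{b\in B}reps(b)\setminus F$, and no layer-0 neuron fires at any other time. A non-failed $v\in N_\ell$, $\ell\ge1$, does not fire at time 0 and fires at time $t\ge1$ iff $\sum_{u\in N_{\ell-1}}w(u,v)x_u(t-1)\ge\tau$, where $x_u(s)\in\{0,1\}$ indicates whether $u$ fires at time $s$. *)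

From HB Require Import structures.
From mathcomp Require Import all_boot all_order all_algebra.
From mathcomp Require Import reals.
Set Implicit Arguments. Unset Strict Implicit. Unset Printing Implicit Defensive.
Import Order.TTheory GRing.Theory Num.Theory.
Local Open Scope ring_scope.

Fixpoint Bset (R : realType) (D : finType) (lev : D -> nat) (C : {set D})
  (children : D -> {set D}) (k : nat) (r : R) (B : {set D}) (l : nat) : {set D} :=
  match l with
  | 0 => B :&: [set c in C | lev c == 0%N]
  | l'.+1 => [set c in C | (lev c == l'.+1) &&
        (r * k%:R <= #|children c :&: Bset lev C children k r B l'|%:R)]
  end.

Definition supp (R : realType) (D : finType) (lev : D -> nat) (C : {set D})
  (children : D -> {set D}) (lmax k : nat) (r : R) (B : {set D}) : {set D} :=
  \bigcup_(l < lmax.+1) Bset lev C children k r B l.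

(* fires t v : neuron v fires at time t.  layer v = index of the layer of v,
   E = edge relation (w(u,v) = 1 iff E u v), F = failed neurons,
   tau = threshold, input B presented at time 0. *)
Fixpoint fires (R : realType) (D N : finType) (layer : N -> nat)
  (reps : D -> {set N}) (E : rel N) (F : {set N}) (tau : R) (B : {set D})
  (t : nat) (v : N) : bool :=
  match t with
  | 0 => [&& layer v == 0%N, v \in \bigcup_(b in B) reps b & v \notin F]
  | t'.+1 => [&& (0 < layer v)%N, v \notin F &
      tau <= \sum_(u : N | layer u == (layer v).-1)
                (E u v)%:R * (fires layer reps E F tau B t' u)%:R]
  end.

(* A live neuron of a concept c in B_r2(l) receives, from
   each of the at least r2 k children of c in B_r2(l-1), at least a m (1 - eps)
   edges from live neurons, all firing at time l-1 by induction; the reps of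
   distinct children are disjoint, so its input reaches r2 k a m (1 - eps) = tau.
   Conversely, edges into reps(c) only come from reps of children of c, and by
   induction only the children in B_r1(l-1) have firing neurons: fewer than r1 k
   children with at most m neurons each, so the input stays below
   r1 k m <= tau. *)

From mathcomp Require Import all_boot all_order all_algebra.
From mathcomp Require Import reals.
From mathcomp Require Import ring.
Set Implicit Arguments. Unset Strict Implicit. Unset Printing Implicit Defensive.
Import Order.TTheory GRing.Theory Num.Theory.
Local Open Scope ring_scope.

Lemma card_bigcup_le (I T : finType) (A : {set I}) (X : I -> {set T}) :
  (#|\bigcup_(i in A) X i| <= \sum_(i in A) #|X i|)%N.
Proof.
elim/big_rec2: _ => [|i n U _ IH]; first by rewrite cards0.
by apply: leq_trans (leq_card_setU _ _) _; rewrite leq_add2l.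
Qed.

Lemma card_bigcup_disjoint (I T : finType) (A : {set I}) (X : I -> {set T}) :
  {in A &, forall i j, i != j -> [disjoint X i & X j]} ->
  #|\bigcup_(i in A) X i| = (\sum_(i in A) #|X i|)%N.
Proof.
elim: {A}_.+1 {-2}A (ltnSn #|A|) => // n IH A leAn disjX.
have [->|[i iA]] := set_0Vmem A; first by rewrite !big_set0 cards0.
have disjXD1 : {in A :\ i &, forall j j', j != j' -> [disjoint X j & X j']}.
  by move=> j j' /setD1P[_ jA] /setD1P[_ j'A]; exact: disjX.
rewrite (big_setD1 i iA) [in RHS](big_setD1 i iA) /= -IH //; last first.
  by rewrite -ltnS (leq_trans _ leAn) // ltnS (cardsD1 i A) iA.
apply/eqP; rewrite (leq_card_setU _ _).2; apply: bigcup_disjoint => j /setD1P[ji jA].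
by apply: disjX; rewrite // eq_sym.
Qed.

Lemma sum_nat_mulb_card (R : pzSemiRingType) (T : finType) (P b1 b2 : pred T) :
  \sum_(u | P u) ((b1 u)%:R * (b2 u)%:R : R) = #|[set u | P u && b1 u && b2 u]|%:R.
Proof.
rewrite -sum1_card natr_sum big_mkcond [RHS]big_mkcond /=; apply: eq_bigr => u _.
by rewrite inE; case: (P u); case: (b1 u); case: (b2 u); rewrite ?mulr0 ?mulr1.
Qed.

Section Hierarchy.
Variables (R : realType) (D : finType) (lev : D -> nat) (C : {set D}).
Variables (children : D -> {set D}) (k : nat) (r : R) (B : {set D}).

Lemma Bset_lev l c : c \in Bset lev C children k r B l -> lev c = l.
Proof.
case: l => [|l] /=; first by rewrite !inE => /and3P[_ _ /eqP].
by rewrite inE => /and3P[_ /eqP].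
Qed.

Lemma mem_supp lmax c : (lev c <= lmax)%N ->
  (c \in supp lev C children lmax k r B) = (c \in Bset lev C children k r B (lev c)).
Proof.
move=> le_c_lmax; apply/bigcupP/idP => [[l _ cBl]|cBc].
  by rewrite (Bset_lev cBl).
by exists (Ordinal (le_c_lmax : (lev c < lmax.+1)%N)).
Qed.

End Hierarchy.

Section Recognition.
Variables (R : realType) (D N : finType) (lev : D -> nat) (C : {set D}).
Variables (children : D -> {set D}) (k : nat).
Variables (layer : N -> nat) (reps : D -> {set N}) (E : rel N) (F : {set N}).
Variables (tau : R) (B : {set D}).

Hypothesis reps_layer : {in C, forall c, {in reps c, forall v, layer v = lev c}}.
Hypothesis reps_disj : {in C &, forall c c', c != c' -> [disjoint reps c & reps c']}.
Hypothesis children_sub : {in C, forall c, (0 < lev c)%N ->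
  children c \subset [set c' in C | lev c' == (lev c).-1]}.

Local Notation fires := (fires layer reps E F tau B).
Local Notation Bset := (Bset lev C children k).

Lemma firesS t v : fires t.+1 v = [&& (0 < layer v)%N, v \notin F &
  tau <= #|[set u | (layer u == (layer v).-1) && E u v && fires t u]|%:R].
Proof. by rewrite /= sum_nat_mulb_card. Qed.

Lemma child_in_C c c' : c \in C -> (0 < lev c)%N -> c' \in children c ->
  c' \in C /\ lev c' = (lev c).-1.
Proof.
move=> cC lc_gt0 c'c; have := subsetP (children_sub cC lc_gt0) c' c'c.
by rewrite inE => /andP[-> /eqP].
Qed.

Lemma fires_of_Bset (r q : R) : 0 <= q -> tau <= r * k%:R * q ->
  (forall c, c \in C -> (0 < lev c)%N -> forall v, v \in reps c ->
     forall c', c' \in children c -> q <= #|[set u in reps c' :\: F | E u v]|%:R) ->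
  forall l c, c \in Bset r B l -> {in reps c :\: F, forall v, fires l v}.
Proof.
move=> q_ge0 tau_le live_edges; elim=> [|l IH] c.
  rewrite /= !inE => /andP[cB /andP[cC /eqP lc0]] v /setDP[vc vF].
  rewrite (reps_layer cC vc) lc0 eqxx vF andbT /=.
  by apply/bigcupP; exists c.
rewrite [c \in _]/= inE => /and3P[cC /eqP lc many_children] v /setDP[vc vF].
have lc_gt0 : (0 < lev c)%N by rewrite lc.
rewrite firesS (reps_layer cC vc) lc vF /=.
set A := children c :&: Bset r B l.
pose live c' := [set u in reps c' :\: F | E u v].
have live_fire : \bigcup_(c' in A) live c' \subset
    [set u | (layer u == l) && E u v && fires l u].
  apply/bigcupsP => c' /setIP[c'c c'B]; apply/subsetP => u.
  have [c'C lc'] := child_in_C cC lc_gt0 c'c; rewrite lc /= in lc'.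
  rewrite !inE => /andP[/andP[uF uc'] Euv].
  rewrite Euv (reps_layer c'C uc') lc' eqxx /=.
  by apply: IH c'B _ _; rewrite inE uF.
have live_disj : {in A &, forall i j, i != j -> [disjoint live i & live j]}.
  move=> i j /setIP[ic _] /setIP[jc _] ij.
  have [iC _] := child_in_C cC lc_gt0 ic; have [jC _] := child_in_C cC lc_gt0 jc.
  apply: disjointWl (disjointWr _ (reps_disj iC jC ij)); apply/subsetP => u;
    by rewrite !inE => /andP[/andP[_ ->]].
apply: le_trans (_ : #|A|%:R * q <= _).
  by apply: le_trans tau_le _; rewrite ler_wpM2r.
apply: le_trans (_ : #|\bigcup_(c' in A) live c'|%:R <= _); last first.
  by rewrite ler_nat subset_leq_card.
rewrite card_bigcup_disjoint // natr_sum mulr_natl -sumr_const.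
by apply: ler_sum => c' /setIP[c'c _]; exact: live_edges cC lc_gt0 v vc c' c'c.
Qed.

Hypothesis edges_from_children : forall u v, E u v -> exists c, [/\ c \in C,
  (0 < lev c)%N, v \in reps c & exists2 c', c' \in children c & u \in reps c'].

Lemma edge_from_child c u v : c \in C -> v \in reps c -> E u v ->
  exists2 c', c' \in children c & u \in reps c'.
Proof.
move=> cC vc /edges_from_children[c0 [c0C _ vc0 c0_child]].
have [<- //|ne] := eqVneq c0 c.
by rewrite (disjointFr (reps_disj c0C cC ne) vc0) in vc.
Qed.

Lemma not_fires_of_notin_Bset (r : R) (m : nat) : B \subset C ->
  {in C, forall c, #|reps c| <= m}%N -> r * k%:R * m%:R <= tau ->
  forall l c, c \in C -> lev c = l -> c \notin Bset r B l ->
  {in reps c, forall v, ~~ fires l v}.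
Proof.
move=> BC reps_le tau_ge; elim=> [|l IH] c cC lc.
  rewrite /= !inE cC lc eqxx !andbT => cNB v vc.
  apply/negP => /and3P[_ /bigcupP[b bB vb] _].
  have bc : b != c by apply: contraNneq cNB => <-.
  by rewrite (disjointFr (reps_disj (subsetP BC b bB) cC bc) vb) in vc.
rewrite [c \in _]/= inE cC lc eqxx !andTb -ltNge => few_children v vc.
have lc_gt0 : (0 < lev c)%N by rewrite lc.
apply/negP; rewrite firesS (reps_layer cC vc) lc => /and3P[_ _]; apply/negP.
rewrite -ltNge; set A := children c :&: Bset r B l.
have active_sub : [set u | (layer u == l) && E u v && fires l u] \subset
    \bigcup_(c' in A) reps c'.
  apply/subsetP => u; rewrite inE => /andP[/andP[_ Euv] fu].
  have [c' c'c uc'] := edge_from_child cC vc Euv.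
  have [c'C lc'] := child_in_C cC lc_gt0 c'c; rewrite lc /= in lc'.
  apply/bigcupP; exists c' => //; rewrite inE c'c /=.
  by apply: contraLR fu => c'NB; exact: IH c'C lc' c'NB u uc'.
have m_gt0 : (0 < m)%N.
  by apply: leq_trans (reps_le c cC); apply/card_gt0P; exists v.
apply: le_lt_trans (_ : (#|A| * m)%N%:R < _).
  rewrite ler_nat; apply: leq_trans (subset_leq_card active_sub) _.
  apply: leq_trans (card_bigcup_le _ _) _; rewrite -sum_nat_const.
  by apply: leq_sum => c' /setIP[c'c _]; exact/reps_le/(child_in_C cC lc_gt0 c'c).1.
by apply: lt_le_trans tau_ge; rewrite natrM ltr_pM2r ?ltr0n.
Qed.

End Recognition.

Theorem theorem8p5
  (R : realType) (lmax n k : nat)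
  (Hlmax : (0 < lmax)%N) (Hn : (0 < n)%N) (Hk : (0 < k)%N)
  (* universal set of concepts, partitioned by level into D_0 .. D_lmax *)
  (D : finType) (lev : D -> nat)
  (Hlev : forall c, (lev c <= lmax)%N)
  (HD0 : #|[set c : D | lev c == 0%N]| = n)
  (* the concept hierarchy *)
  (C : {set D}) (children : D -> {set D})
  (HCtop : #|[set c in C | lev c == lmax]| = k)
  (Hchild_sub : forall c, c \in C -> (1 <= lev c)%N ->
     children c \subset [set c' in C | lev c' == (lev c).-1])
  (Hchild_card : forall c, c \in C -> (1 <= lev c)%N -> #|children c| = k)
  (Hchild_disj : forall c c', c \in C -> c' \in C -> (1 <= lev c)%N ->
     lev c = lev c' -> c != c' -> [disjoint children c & children c'])
  (* parameters *)
  (r1 r2 eps a : R)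
  (Hr1 : 0 <= r1 <= 1) (Hr2 : 0 <= r2 <= 1) (Heps : 0 <= eps <= 1)
  (Ha : 0 < a) (Hr12 : r1 <= a * r2 * (1 - eps))
  (m : nat) (Hm : (0 < m)%N)
  (* the network: neurons partitioned into layers N_0 .. N_lmax *)
  (N : finType) (layer : N -> nat)
  (Hlayer : forall v, (layer v <= lmax)%N)
  (reps : D -> {set N})
  (* reps are defined for c in D_0 and for c in C of level >= 1 *)
  (Hreps_card : forall c, (lev c == 0%N) || (c \in C) -> #|reps c| = m)
  (Hreps_layer : forall c, (lev c == 0%N) || (c \in C) ->
     forall v, v \in reps c -> layer v = lev c)
  (Hreps_disj : forall c c', (lev c == 0%N) || (c \in C) ->
     (lev c' == 0%N) || (c' \in C) -> c != c' -> [disjoint reps c & reps c'])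
  (E : rel N)
  (HE : forall u v, E u v -> exists c, [/\ c \in C, (1 <= lev c)%N,
     v \in reps c & exists2 c', c' \in children c & u \in reps c'])
  (F : {set N})
  (HF : forall c, (lev c == 0%N) || (c \in C) ->
     m%:R * (1 - eps) <= #|reps c :\: F|%:R)
  (HFE : forall c, c \in C -> (1 <= lev c)%N -> forall v, v \in reps c ->
     forall c', c' \in children c ->
     a * m%:R * (1 - eps) <= #|[set u in reps c' :\: F | E u v]|%:R) :
  let tau := a * r2 * k%:R * m%:R * (1 - eps) in
  forall B : {set D}, B \subset [set c in C | lev c == 0%N] ->
  forall c, c \in C ->
    (c \in supp lev C children lmax k r2 B ->
       m%:R * (1 - eps) <=
       #|[set v in reps c | fires layer reps E F tau B (lev c) v]|%:R) /\
    (c \notin supp lev C children lmax k r1 B ->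
       forall v, v \in reps c -> ~~ fires layer reps E F tau B (lev c) v).
Proof.
move=> tau B B_sub c cC.
have inC c' : c' \in C -> (lev c' == 0%N) || (c' \in C) by move->; rewrite orbT.
have reps_layer : {in C, forall c', {in reps c', forall v, layer v = lev c'}}.
  by move=> c' /inC; exact: Hreps_layer.
have reps_disj : {in C &, forall c1 c2, c1 != c2 -> [disjoint reps c1 & reps c2]}.
  by move=> c1 c2 /inC c1C /inC; exact: Hreps_disj.
have B_subC : B \subset C.
  by apply: subset_trans B_sub _; apply/subsetP => b; rewrite inE => /andP[].
have q_ge0 : 0 <= a * m%:R * (1 - eps).
  by case/andP: Heps => _ eps_le1; rewrite mulr_ge0 ?subr_ge0 // mulr_ge0 // ltW.
have tau_le : tau <= r2 * k%:R * (a * m%:R * (1 - eps)).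
  by rewrite le_eqVlt; apply/orP; left; apply/eqP; rewrite /tau; ring.
split.
- rewrite mem_supp // => cB.
  apply: le_trans (HF c (inC c cC)) _; rewrite ler_nat subset_leq_card //.
  apply/subsetP => v vcF; rewrite inE (setDP vcF).1 /=.
  exact: fires_of_Bset reps_layer reps_disj Hchild_sub _ _ q_ge0 tau_le HFE _ _ cB v vcF.
- rewrite mem_supp // => cNB v vc.
  have tau_ge : r1 * k%:R * m%:R <= tau.
    have -> : tau = a * r2 * (1 - eps) * k%:R * m%:R by rewrite /tau; ring.
    by rewrite ler_wpM2r // ler_wpM2r.
  apply: not_fires_of_notin_Bset reps_layer reps_disj Hchild_sub HE _ _ B_subC _ tau_ge
    _ _ cC erefl cNB v vc.
  by move=> c' c'C; rewrite Hreps_card ?inC.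
Qed.
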